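(* Assume (A1)–(A4). Run the Algorithm with $x_1\in R\mathbb{B}$, $\eta=\frac{2R}{G_f\sqrt{T}}$ and $\rho=0$. Then $\mathrm{Reg}_T\le2RG_f\sqrt{T}$, and for all $t\in[T]$, $$g(x_t)\le2RG_g\exp\Big(-\frac{\sigma^2(t-1)}{2G_g^2}\Big)+\frac{2RG_g}{\xi\sqrt{T}}.$$
   Context: Let $d,T$ be positive integers and $[T]=\{1,\dots,T\}$. Write $\|\cdot\|$ for the Euclidean norm and $\mathbb{B}=\{x\in\mathbb{R}^d:\|x\|\le1\}$. For a closed convex set $\mathcal{Y}$, $\Pi_{\mathcal{Y}}$ is the Euclidean projection onto $\mathcal{Y}$. For $a\in\mathbb{R}$, $[a]_+=\max(a,0)$. Let $g:\mathbb{R}^d\to\mathbb{R}$ be convex with subdifferential $\partial g(x)$, and set $\mathcal{X}=\{x:g(x)\le0\}$. Assumptions: (A1) there is $R>0$ with $\mathcal{X}\subseteq R\mathbb{B}$; (A2) $f_1,\dots,f_T:\mathbb{R}^d\to\mathbb{R}$ are convex and differentiable, and there is $G_f>0$ with $\|\nabla f_t(x)\|\le G_f$ for all $x\in R\mathbb{B}$ and all $t\in[T]$; (A3) there is $G_g>0$ with $\|s\|\le G_g$ for all $s\in\partial g(x)$ and all $x\in R\mathbb{B}$; (A4) there are $\sigma,\epsilon>0$ such that $\mathcal{X}'=\{x:g(x)=-\epsilon\}$ is nonempty and $\|s\|\ge\sigma$ for all $s\in\partial g(x)$ and all $x\in\mathcal{X}'$. Algorithm (OGD with Polyak feasibility steps).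 Inputs are $x_1\in\mathbb{R}^d$, $\eta>0$ and $\rho\ge0$. For $t=1,\dots,T$: - play $x_t$ and then receive $f_t$; the functions may be chosen adversarially and may depend on past actions; - query $g_t=g(x_t)$ and some $s_t\in\partial g(x_t)$; - set $y_t=x_t-\eta\nabla f_t(x_t)$; - if $s_t\ne0$, set $x_{t+1}=\Pi_{R\mathbb{B}}\big(y_t-\frac{[g_t+s_t^\top(y_t-x_t)+\rho]_+}{\|s_t\|^2}s_t\big)$; if $s_t=0$, set $x_{t+1}=\Pi_{R\mathbb{B}}(y_t)$. Regret is $\mathrm{Reg}_T=\sum_{t=1}^Tf_t(x_t)-\min_{x\in\mathcal{X}}\sum_{t=1}^Tf_t(x)$. Also $\gamma=1-\sigma^2/G_g^2$ and $\xi=1-\sqrt{\gamma}$. *)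

From HB Require Import structures.
From mathcomp Require Import all_boot all_order all_algebra.
From mathcomp Require Import all_classical all_reals all_analysis.
Set Implicit Arguments. Unset Strict Implicit. Unset Printing Implicit Defensive.
Import Order.TTheory GRing.Theory Num.Theory.
Import numFieldNormedType.Exports.
Local Open Scope ring_scope.

Section Defs.
Variables (R : realType) (d : nat).
Local Notation vec := 'rV[R]_d.

Definition dotv (u v : vec) : R := (u *m v^T) 0 0.
Definition enorm (u : vec) : R := Num.sqrt (dotv u u).

Definition convex_fun (h : vec -> R) : Prop :=
  forall (x y : vec) (l : R), 0 <= l <= 1 ->
    h (l *: x + (1 - l) *: y) <= l * h x + (1 - l) * h y.

Definition subgrad (h : vec -> R) (x s : vec) : Prop :=
  forall y : vec, h x + dotv s (y - x) <= h y.

Definition is_gradient (h : vec -> R) (x gr : vec) : Prop :=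
  differentiable h x /\ forall v : vec, 'D_v h x = dotv gr v.

Definition in_ball (Rad : R) (x : vec) : Prop := enorm x <= Rad.

Definition is_proj (C : vec -> Prop) (y p : vec) : Prop :=
  C p /\ forall q : vec, C q -> enorm (y - p) <= enorm (y - q).

Definition pos_part (a : R) : R := Num.max a 0.

(* The point before projection in one round of the algorithm:
   y = x - eta * grad, then the Polyak feasibility step with parameter rho. *)
Definition pre_proj (g : vec -> R) (eta rho : R) (x gradf s : vec) : vec :=
  let y := x - eta *: gradf in
  if s != 0 then
    y - (pos_part (g x + dotv s (y - x) + rho) / (enorm s ^+ 2)) *: s
  else y.

End Defs.

(* Each round maps x_t through two maps that are nonexpansive towards every point of
   X = {g <= 0}: the Polyak step, which is the projection onto the half-space
   {g(x_t) + <s_t, . - x_t> <= 0} containing X, and the projection onto R B.  The regret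
   bound is then the telescoping argument of projected online gradient descent.
   For the violation, (A4) makes g sharp: if g(x) > 0, the projection q of x onto
   {g <= -eps} carries a subgradient parallel to x - q, whence sigma dist(x, X) <= g(x).
   A Polyak step from x therefore removes g(x)^2/|s|^2 >= (sigma/Gg)^2 dist(x, X)^2 from the
   squared distance to X, so dist(x_{t+1}, X) <= sqrt(gamma) dist(x_t, X) + eta Gf; unrolling
   this and using g(x_t) <= Gg dist(x_t, X) gives the bound.  Subgradients, including the one
   parallel to x - q, are obtained by one-dimensional Hahn-Banach extensions of linear
   minorants. *)

From HB Require Import structures.
From mathcomp Require Import all_boot all_order all_algebra.
From mathcomp Require Import all_classical all_reals all_analysis.
From mathcomp Require Import ring lra.
Import Order.TTheory GRing.Theory Num.Theory.
Import numFieldNormedType.Exports.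
Set Implicit Arguments. Unset Strict Implicit. Unset Printing Implicit Defensive.
Local Open Scope ring_scope.
Local Open Scope classical_set_scope.

Section Euclid.
Variables (R : realType) (d : nat).
Local Notation vec := 'rV[R]_d.
Implicit Types (u v w : vec) (a : R).

Lemma dotvE u v : dotv u v = \sum_i u 0 i * v 0 i.
Proof. by rewrite /dotv !mxE; apply: eq_bigr => i _; rewrite !mxE. Qed.

Lemma dotvC u v : dotv u v = dotv v u.
Proof. by rewrite !dotvE; apply: eq_bigr => i _; rewrite mulrC. Qed.

Lemma dotvDl u w v : dotv (u + w) v = dotv u v + dotv w v.
Proof. by rewrite !dotvE -big_split; apply: eq_bigr => i _; rewrite !mxE mulrDl. Qed.

Lemma dotvZl a u v : dotv (a *: u) v = a * dotv u v.
Proof. by rewrite !dotvE mulr_sumr; apply: eq_bigr => i _; rewrite !mxE mulrA. Qed.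

Lemma dotvNl u v : dotv (- u) v = - dotv u v.
Proof. by rewrite -scaleN1r dotvZl mulN1r. Qed.

Lemma dotvBl u w v : dotv (u - w) v = dotv u v - dotv w v.
Proof. by rewrite dotvDl dotvNl. Qed.

Lemma dotvDr u w v : dotv v (u + w) = dotv v u + dotv v w.
Proof. by rewrite !(dotvC v) dotvDl. Qed.

Lemma dotvZr a u v : dotv v (a *: u) = a * dotv v u.
Proof. by rewrite !(dotvC v) dotvZl. Qed.

Lemma dotvNr u v : dotv v (- u) = - dotv v u.
Proof. by rewrite !(dotvC v) dotvNl. Qed.

Lemma dotvBr u w v : dotv v (u - w) = dotv v u - dotv v w.
Proof. by rewrite !(dotvC v) dotvBl. Qed.

Lemma dotv0l v : dotv 0 v = 0.
Proof. by rewrite dotvE big1 // => i _; rewrite mxE mul0r. Qed.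

Lemma dotv0r v : dotv v 0 = 0.
Proof. by rewrite dotvC dotv0l. Qed.

Lemma dotvv_ge0 v : 0 <= dotv v v.
Proof. by rewrite dotvE sumr_ge0 // => i _; rewrite -expr2 sqr_ge0. Qed.

Lemma dotvv_eq0 v : dotv v v = 0 -> v = 0.
Proof.
rewrite dotvE => /eqP; rewrite psumr_eq0 => [/allP v0|i _]; last first.
  by rewrite -expr2 sqr_ge0.
apply/rowP => i; rewrite mxE.
by have := v0 i (mem_index_enum _); rewrite mulf_eq0 orbb => /eqP.
Qed.

Lemma enorm_ge0 v : 0 <= enorm v.
Proof. exact: sqrtr_ge0. Qed.

Lemma sqr_enorm v : enorm v ^+ 2 = dotv v v.
Proof. by rewrite sqr_sqrtr // dotvv_ge0. Qed.

Lemma enorm0 : enorm (0 : vec) = 0.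
Proof. by rewrite /enorm dotv0l sqrtr0. Qed.

Lemma enorm_eq0 v : enorm v = 0 -> v = 0.
Proof. by move=> v0; apply: dotvv_eq0; rewrite -sqr_enorm v0 expr0n. Qed.

Lemma enorm_gt0 v : v != 0 -> 0 < enorm v.
Proof.
by move=> v0; rewrite lt_def enorm_ge0 andbT; apply: contra_neq v0; apply: enorm_eq0.
Qed.

Lemma enormN v : enorm (- v) = enorm v.
Proof. by rewrite /enorm dotvNl dotvNr opprK. Qed.

Lemma enormZ a v : enorm (a *: v) = `|a| * enorm v.
Proof. by rewrite /enorm dotvZl dotvZr mulrA -expr2 sqrtrM ?sqr_ge0 // sqrtr_sqr. Qed.

Lemma sqr_enormZ a v : enorm (a *: v) ^+ 2 = a ^+ 2 * enorm v ^+ 2.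
Proof. by rewrite enormZ exprMn real_normK ?num_real. Qed.

Lemma ler_sqr_enorm u v : (enorm u ^+ 2 <= enorm v ^+ 2) = (enorm u <= enorm v).
Proof. by rewrite ler_pXn2r // nnegrE enorm_ge0. Qed.

Lemma sqr_enormB u v :
  enorm (u - v) ^+ 2 = enorm u ^+ 2 - 2 * dotv u v + enorm v ^+ 2.
Proof. rewrite !sqr_enorm dotvBl !dotvBr (dotvC v u); ring. Qed.

Lemma cauchy_schwarz u v : dotv u v <= enorm u * enorm v.
Proof.
have [u0|/enorm_gt0 u_gt0] := eqVneq u 0; first by rewrite u0 dotv0l enorm0 mul0r.
have [v0|/enorm_gt0 v_gt0] := eqVneq v 0; first by rewrite v0 dotv0r enorm0 mulr0.
(* expand 0 <= |b u - a v|^2 with a = |u| and b = |v| *)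
have := dotvv_ge0 (enorm v *: u - enorm u *: v).
rewrite dotvBl !dotvBr !dotvZl !dotvZr -!sqr_enorm (dotvC v u) => h.
have : 0 <= enorm u * enorm v * (2 * (enorm u * enorm v - dotv u v)) by nra.
by rewrite pmulr_rge0 ?mulr_gt0 //; nra.
Qed.

Lemma ler_enormD u v : enorm (u + v) <= enorm u + enorm v.
Proof.
rewrite -(@ler_pXn2r _ 2) ?nnegrE ?addr_ge0 ?enorm_ge0 //.
rewrite sqr_enorm dotvDl !dotvDr -!sqr_enorm (dotvC v u).
have := cauchy_schwarz u v; nra.
Qed.

End Euclid.

Lemma le0_of_le_mulr (R : realFieldType) (a b : R) :
  0 <= b -> (forall l, 0 < l <= 1 -> a <= l * b) -> a <= 0.
Proof.
move=> b0 small; rewrite leNgt; apply/negP => a0.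
have ba_gt0 : 0 < b + a by rewrite ltr_wpDl.
have /small : 0 < a / (b + a) <= 1.
  by rewrite divr_gt0 //= ler_pdivrMr // mul1r lerDr.
by rewrite mulrAC ler_pdivlMr //; nra.
Qed.

Section Projection.
Variables (R : realType) (d : nat).
Local Notation vec := 'rV[R]_d.

Definition is_convex_set (C : vec -> Prop) : Prop :=
  forall u v l, C u -> C v -> 0 <= l <= 1 -> C (l *: u + (1 - l) *: v).

Lemma convex_ball (Rad : R) : is_convex_set (in_ball Rad).
Proof.
move=> u v l; rewrite /in_ball => Hu Hv /andP[l0 l1].
apply: le_trans (ler_enormD _ _) _; rewrite !enormZ !ger0_norm ?subr_ge0 //.
have := enorm_ge0 u; have := enorm_ge0 v; nra.
Qed.

Lemma in_ball_enormB (Rad : R) (u v : vec) :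
  in_ball Rad u -> in_ball Rad v -> enorm (u - v) <= 2 * Rad.
Proof.
rewrite /in_ball => bu bv; apply: le_trans (ler_enormD u (- v)) _; rewrite enormN; lra.
Qed.

Lemma convex_sublevel (h : vec -> R) (c : R) :
  convex_fun h -> is_convex_set (fun z => h z <= c).
Proof.
move=> hc u v l hu hv l01; apply: le_trans (hc u v l l01) _.
by case/andP: l01 => l0 l1; nra.
Qed.

Variables (C : vec -> Prop) (y p : vec).
Hypotheses (convC : is_convex_set C) (projp : is_proj C y p).

Lemma proj_obtuse u : C u -> dotv (y - p) (u - p) <= 0.
Proof.
case: projp => Cp pmin Cu.
apply: (@le0_of_le_mulr _ _ (enorm (u - p) ^+ 2 / 2)); first by rewrite divr_ge0 ?sqr_ge0.
move=> l /andP[l0 l1].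
have /pmin : C (l *: u + (1 - l) *: p) by apply: convC => //; rewrite (ltW l0) l1.
rewrite -ler_sqr_enorm.
have -> : y - (l *: u + (1 - l) *: p) = (y - p) - l *: (u - p).
  by apply/rowP => i; rewrite !mxE; ring.
rewrite [X in _ <= X -> _]sqr_enormB sqr_enormZ dotvZr => h.
have : 2 * l * dotv (y - p) (u - p) <= l ^+ 2 * enorm (u - p) ^+ 2 by lra.
by nra.
Qed.

Lemma enorm_proj_le u : C u -> enorm (p - u) <= enorm (y - u).
Proof.
move=> /proj_obtuse yp_up; rewrite -ler_sqr_enorm.
have -> : y - u = (y - p) - (u - p) by rewrite opprB addrA subrK.
rewrite -opprB enormN [in leRHS]sqr_enormB; have := enorm_ge0 (y - p); nra.
Qed.

End Projection.

Lemma sqr_pos_partB_le (R : realType) (a b : R) :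
  (pos_part a - pos_part b) ^+ 2 <= (pos_part a - pos_part b) * (a - b).
Proof. by rewrite /pos_part; case: (lerP 0 a) => ha; case: (lerP 0 b) => hb; nra. Qed.

Section Polyak.
Variables (R : realType) (d : nat).
Local Notation vec := 'rV[R]_d.

(* The Euclidean projection of w onto the half-space {w | a + <s, w - x> <= 0}. *)
Definition polyak_step (a : R) (x s w : vec) : vec :=
  if s != 0 then w - (pos_part (a + dotv s (w - x)) / enorm s ^+ 2) *: s else w.

Lemma pre_proj0E (g : vec -> R) (eta : R) (x gr s : vec) :
  pre_proj g eta 0 x gr s = polyak_step (g x) x s (x - eta *: gr).
Proof. by rewrite /pre_proj addr0. Qed.

Variables (a : R) (x s : vec).
Local Notation P := (polyak_step a x s).

Lemma polyak_step_id u : a + dotv s (u - x) <= 0 -> P u = u.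
Proof.
by move=> hu; rewrite /polyak_step /pos_part (max_r hu) mul0r scale0r subr0 if_same.
Qed.

Lemma polyak_step_nonexp w1 w2 : enorm (P w1 - P w2) <= enorm (w1 - w2).
Proof.
rewrite /polyak_step; case: ifP => // /enorm_gt0 s_gt0.
set p1 := pos_part _; set p2 := pos_part _; set k := enorm s ^+ 2.
have k_gt0 : 0 < k by rewrite exprn_gt0.
have -> : w1 - p1 / k *: s - (w2 - p2 / k *: s) = (w1 - w2) - ((p1 - p2) / k) *: s.
  by apply/rowP => i; rewrite !mxE; ring.
rewrite -ler_sqr_enorm [leLHS]sqr_enormB dotvZr sqr_enormZ -/k.
have lip : (p1 - p2) ^+ 2 <= (p1 - p2) * dotv (w1 - w2) s.
  have := sqr_pos_partB_le (a + dotv s (w1 - x)) (a + dotv s (w2 - x)).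
  by rewrite -/p1 -/p2 dotvC dotvBl -!(dotvC s) !dotvBr; congr (_ <= _ * _); ring.
have -> : ((p1 - p2) / k) ^+ 2 * k = (p1 - p2) ^+ 2 / k.
  by field; rewrite gt_eqF.
have h1 : (p1 - p2) ^+ 2 / k <= (p1 - p2) * dotv (w1 - w2) s / k.
  by rewrite ler_pM2r ?invr_gt0.
have h2 : 0 <= (p1 - p2) ^+ 2 / k by rewrite divr_ge0 ?sqr_ge0 ?ltW.
rewrite mulrAC; lra.
Qed.

Lemma polyak_step_sqr_dist u : s != 0 -> 0 < a -> a + dotv s (u - x) <= 0 ->
  enorm (P x - u) ^+ 2 <= enorm (x - u) ^+ 2 - a ^+ 2 / enorm s ^+ 2.
Proof.
move=> s0 a0 hu; rewrite /polyak_step s0 subrr dotv0r addr0 /pos_part (max_l (ltW a0)).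
set k := enorm s ^+ 2; have k_gt0 : 0 < k by rewrite exprn_gt0 ?enorm_gt0.
have -> : x - a / k *: s - u = (x - u) - a / k *: s by rewrite addrAC.
rewrite [leLHS]sqr_enormB sqr_enormZ dotvZr -/k.
have hD : a <= dotv (x - u) s by rewrite dotvC -opprB dotvNr; lra.
have -> : (a / k) ^+ 2 * k = a ^+ 2 / k by field; rewrite gt_eqF.
have : a ^+ 2 / k <= a / k * dotv (x - u) s.
  rewrite [leLHS](_ : _ = a / k * a); last by rewrite expr2 mulrAC.
  by rewrite ler_wpM2l // divr_ge0 // ltW.
lra.
Qed.

End Polyak.

Section LinearExtension.
Variables (R : realType) (d : nat).
Local Notation vec := 'rV[R]_d.
Variables (h : vec -> R) (V : vec -> Prop) (L e : vec).
Hypotheses (hc : convex_fun h) (convV : is_convex_set V)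
  (minorL : forall v, V v -> dotv L v <= h v).

Lemma extension_slopes_le v1 v2 a b : V v1 -> V v2 -> 0 < a -> 0 < b ->
  (dotv L v2 - h (v2 - b *: e)) / b <= (h (v1 + a *: e) - dotv L v1) / a.
Proof.
move=> V1 V2 a0 b0; have ab0 : 0 < a + b by rewrite addr_gt0.
set l := a / (a + b); have l1 : 1 - l = b / (a + b) by rewrite /l; field; rewrite gt_eqF.
have l01 : 0 <= l <= 1.
  by rewrite divr_ge0 ?(ltW a0) ?(ltW ab0) //= ler_pdivrMr // mul1r lerDl ltW.
(* the convex combination l v2 + (1 - l) v1 of V also splits through v2 - b e and v1 + a e *)
have E : l *: v2 + (1 - l) *: v1 = l *: (v2 - b *: e) + (1 - l) *: (v1 + a *: e).
  by apply/rowP => i; rewrite !mxE l1 /l; field; rewrite gt_eqF.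
have := minorL (convV V2 V1 l01); rewrite {2}E dotvDr !dotvZr => /le_trans/(_ (hc _ _ l01)).
set X := dotv L v2 - h _; set Y := h _ - dotv L v1 => key.
have {}key : l * X <= (1 - l) * Y by rewrite /X /Y !mulrBr; lra.
rewrite ler_pdivrMr // mulrAC ler_pdivlMr // -[in leLHS](divfK (lt0r_neq0 ab0) a) -/l.
rewrite -[in leRHS](divfK (lt0r_neq0 ab0) b) -l1.
by have := ler_wpM2r (ltW ab0) key; lra.
Qed.

Lemma linear_extension c0 : V 0 ->
  (forall v a, V v -> 0 < a -> c0 * a <= h (v + a *: e) - dotv L v) ->
  exists2 c, c0 <= c & forall v a, V v -> dotv L v + c * a <= h (v + a *: e).
Proof.
move=> V0 hc0.
(* any c between the sup of the left slopes and the inf of the right slopes works *)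
pose lslopes := [set (dotv L v - h (v - b *: e)) / b | v in V & b in [set b | 0 < b]].
have lslopes_ub v a : V v -> 0 < a -> ubound lslopes ((h (v + a *: e) - dotv L v) / a).
  by move=> Vv a0 _ [v2 V2 [b b0 <-]]; exact: extension_slopes_le.
have lslopes0 : lslopes !=set0.
  by exists ((dotv L 0 - h (0 - 1 *: e)) / 1); exists 0 => //; exists 1 => //=; exact: ltr01.
have hub : has_ubound lslopes by exists ((h (0 + 1 *: e) - dotv L 0) / 1); apply: lslopes_ub.
have sup_le : sup lslopes <= Num.max (sup lslopes) c0 by rewrite le_max lexx.
exists (Num.max (sup lslopes) c0) => [|v a Vv]; first by rewrite le_max lexx orbT.
case: (ltrgtP a 0) => [a_lt0|a_gt0|->]; last by rewrite scale0r mulr0 !addr0; apply: minorL.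
- have : lslopes ((dotv L v - h (v - (- a) *: e)) / (- a)).
    by exists v => //; exists (- a) => //=; rewrite oppr_gt0.
  move=> /(ub_le_sup hub); rewrite scaleNr opprK => /le_trans/(_ sup_le).
  by rewrite ler_pdivrMr ?oppr_gt0 //; lra.
- have sup_le_slope : sup lslopes <= (h (v + a *: e) - dotv L v) / a.
    by apply: ge_sup => //; exact: lslopes_ub.
  have c0_le_slope : c0 <= (h (v + a *: e) - dotv L v) / a by rewrite ler_pdivlMr ?hc0.
  have : Num.max (sup lslopes) c0 <= (h (v + a *: e) - dotv L v) / a.
    by rewrite ge_max sup_le_slope.
  by rewrite ler_pdivlMr //; lra.
Qed.

End LinearExtension.

Section SubgradientExists.
Variables (R : realType) (d : nat).
Local Notation vec := 'rV[R]_d.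

Lemma dotv_delta (u : vec) (j : 'I_d) : dotv u (delta_mx 0 j) = u 0 j.
Proof.
rewrite dotvE (bigD1 j) //= big1 ?addr0 => [|i /negbTE ij]; first by rewrite mxE !eqxx mulr1.
by rewrite mxE ij andbF mulr0.
Qed.

Lemma convex_shift (g : vec -> R) (q : vec) :
  convex_fun g -> convex_fun (fun v => g (q + v) - g q).
Proof.
move=> gc x y l l01.
have -> : q + (l *: x + (1 - l) *: y) = l *: (q + x) + (1 - l) *: (q + y).
  by apply/rowP => i; rewrite !mxE; ring.
by have := gc (q + x) (q + y) l l01; lra.
Qed.

Definition span_first (k : nat) (v : vec) : Prop :=
  forall i : 'I_d, (k <= i)%N -> v 0 i = 0.

Lemma convex_span_first k : is_convex_set (span_first k).
Proof. by move=> v w l Vv Vw _ i ki; rewrite !mxE Vv // Vw // !mulr0 addr0. Qed.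

Variables (h : vec -> R).
Hypothesis hc : convex_fun h.

Lemma extend_minorant k :
  (exists L, forall v, span_first k v -> dotv L v <= h v) ->
  exists L, forall v, span_first k.+1 v -> dotv L v <= h v.
Proof.
move=> [L minorL]; have [kd|dk] := ltnP k d; last first.
  exists L => v Vv; apply: minorL => i ki.
  by move: (ltn_ord i); rewrite ltnNge (leq_trans dk ki).
pose j := Ordinal kd; pose e : vec := delta_mx 0 j.
have V0 : span_first k 0 by move=> i _; rewrite mxE.
have Hc0 v a : span_first k v -> 0 < a ->
    (dotv L 0 - h (0 - 1 *: e)) / 1 * a <= h (v + a *: e) - dotv L v.
  move=> Vv a0; rewrite -ler_pdivlMr //.
  exact: extension_slopes_le hc (@convex_span_first k) minorL _ _ _ _ Vv V0 a0 ltr01.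
have [c _ ext] := linear_extension hc (@convex_span_first k) minorL V0 Hc0.
exists (L + (c - L 0 j) *: e) => w Vw.
pose v := w - w 0 j *: e.
have Vv : span_first k v.
  move=> i ki; rewrite /v !mxE; have [->|ij] := eqVneq i j; first by rewrite !eqxx mulr1 subrr.
  rewrite andbF mulr0 subr0; apply: Vw; rewrite ltn_neqAle ki andbT.
  by apply: contra_neq ij => ik; apply: val_inj.
rewrite dotvDl dotvZl (dotvC e) dotv_delta.
have -> : dotv L w = dotv L v + w 0 j * L 0 j by rewrite /v dotvBr dotvZr dotv_delta subrK.
by have := ext v (w 0 j) Vv; rewrite subrK; lra.
Qed.

Lemma minorant_exists : h 0 = 0 -> exists L, forall v, dotv L v <= h v.
Proof.
move=> h0; suff ext k : exists L, forall v, span_first k v -> dotv L v <= h v.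
  by have [L minorL] := ext d; exists L => v; apply: minorL => i; rewrite leqNgt ltn_ord.
elim: k => [|k /extend_minorant //]; exists 0 => v V0.
have -> : v = 0 by apply/rowP => i; rewrite mxE; apply: V0.
by rewrite dotv0r h0.
Qed.

End SubgradientExists.

Lemma subgrad_exists (R : realType) (d : nat) (g : 'rV[R]_d -> R) (q : 'rV[R]_d) :
  convex_fun g -> exists s, subgrad g q s.
Proof.
move=> /(convex_shift q)/minorant_exists [|s minor_s]; first by rewrite addr0 subrr.
exists s => y; have := minor_s (y - q); rewrite subrKC; lra.
Qed.

Section SublevelProjection.
Variables (R : realType) (d : nat).
Local Notation vec := 'rV[R]_d.

(* The topology of 'rV[R]_d is that of the sup norm `|v|. *)
Lemma coord_le_mxnorm (v : vec) i : `|v 0 i| <= `|v|.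
Proof.
have /mapP[j Hj ->] : `|v 0 i| \in [seq `|v x.1 x.2| | x : 'I_1 * 'I_d].
  by apply/mapP; exists (0, i) => //=; rewrite mem_enum.
by rewrite [leRHS]/Num.Def.normr /= mx_normrE; apply/bigmax_geP; right => /=; exists j.
Qed.

Lemma coord_le_enorm (v : vec) i : `|v 0 i| <= enorm v.
Proof.
rewrite -(@ler_pXn2r _ 2) ?nnegrE ?enorm_ge0 // sqr_enorm dotvE real_normK ?num_real //.
by rewrite (bigD1 i) //= expr2 lerDl sumr_ge0 // => j _; rewrite -expr2 sqr_ge0.
Qed.

Lemma mxnorm_le_enorm (v : vec) : `|v| <= enorm v.
Proof.
rewrite [leLHS]/Num.Def.normr /= mx_normrE; apply/bigmax_leP; split => [|[i j] _ /=].
  exact: enorm_ge0.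
by rewrite (ord1 i); exact: coord_le_enorm.
Qed.

Lemma dotv_le_mxnorm (s w : vec) : `|dotv s w| <= (\sum_i `|s 0 i|) * `|w|.
Proof.
rewrite dotvE mulr_suml; apply: le_trans (ler_norm_sum _ _ _) _.
by apply: ler_sum => i _; rewrite normrM ler_wpM2l // coord_le_mxnorm.
Qed.

Lemma closed_sublevel (g : vec -> R) (c : R) :
  convex_fun g -> closed [set z | g z <= c].
Proof.
move=> gc y y_cl; have [s sub_s] := subgrad_exists y gc.
set M := \sum_i `|s 0 i|; have M0 : 0 <= M by exact: sumr_ge0.
apply/ler_addgt0Pr => e e0.
have r0 : 0 < e / (M + 1) by rewrite divr_gt0 // ltr_wpDl.
have [z [/= gz]] := y_cl _ (nbhsx_ballx y _ r0).
rewrite -ball_normE /= distrC => yz.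
have Me : M * `|z - y| <= e.
  apply: le_trans (_ : M * (e / (M + 1)) <= e).
    by rewrite ler_wpM2l // ltW.
  by rewrite mulrA ler_pdivrMr ?ltr_wpDl //; nra.
have := sub_s z; have := dotv_le_mxnorm s (z - y); have := ler_norm (- dotv s (z - y)).
by rewrite normrN -/M; lra.
Qed.

Lemma continuous_sqr_dist (x : vec) : continuous (fun z : vec => dotv (x - z) (x - z)).
Proof.
have -> : (fun z : vec => dotv (x - z) (x - z)) =
    (fun z => \sum_(i <- index_enum 'I_d) (x 0 i - z 0 i) * (x 0 i - z 0 i)).
  by apply: funext => z; rewrite dotvE; apply: eq_bigr => i _; rewrite !mxE.
apply: (@continuous_big _ _ +%R 0 predT add_continuous) => i _ z.
have coordB : continuous (fun z : vec => x 0 i - z 0 i).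
  by move=> w; apply: continuousB; [exact: cst_continuous | exact: coord_continuous].
exact: continuousM (coordB z) (coordB z).
Qed.

Lemma sublevel_proj_exists (g : vec -> R) (c Rad : R) (x : vec) :
  convex_fun g -> (exists z, g z <= c) -> (forall z, g z <= c -> in_ball Rad z) ->
  exists q, is_proj (fun z => g z <= c) x q.
Proof.
move=> gc [z0 gz0] bounded_sub.
have cpt : compact [set z | g z <= c].
  apply: bounded_closed_compact; last exact: closed_sublevel.
  exists Rad; split; first exact: num_real.
  move=> M RM z /= gz; apply: le_trans (mxnorm_le_enorm _) _.
  exact: le_trans (bounded_sub _ gz) (ltW RM).
have [||q qA qmin] := @EVT_min_rV _ _ (fun z => dotv (x - z) (x - z)) _ _ cpt.
- by exists z0.
- by apply: continuous_subspaceT; exact: continuous_sqr_dist.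
exists q; split => [|z gz]; first by move: qA; rewrite inE.
rewrite -ler_sqr_enorm !sqr_enorm; apply: qmin.
by rewrite inE.
Qed.

End SublevelProjection.

Section ProjectionOntoSublevel.
Variables (R : realType) (d : nat).
Local Notation vec := 'rV[R]_d.
Variables (g : vec -> R) (c : R) (x q : vec).
Hypotheses (gc : convex_fun g) (projq : is_proj (fun z => g z <= c) x q) (gx : c < g x).

Let n := x - q.

Let n_gt0 : 0 < dotv n n.
Proof.
rewrite -sqr_enorm exprn_gt0 // enorm_gt0 // subr_eq0.
by apply: contraTneq gx => ->; rewrite -leNgt; case: projq.
Qed.

Lemma proj_sublevel_dot_lt0 z : g z < c -> dotv n (z - q) < 0.
Proof.
move=> gz; set del := c - g z; have del0 : 0 < del by rewrite subr_gt0.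
have den0 : 0 < g x - c + del by rewrite addr_gt0 // subr_gt0.
set th := del / (g x - c + del).
have th01 : 0 <= th <= 1.
  by rewrite divr_ge0 ?(ltW del0) ?(ltW den0) //= ler_pdivrMr // mul1r lerDr subr_ge0 ltW.
have th0 : 0 < th by rewrite divr_gt0.
(* th is chosen so that convexity puts th x + (1 - th) z back in the sublevel set *)
have : g (th *: x + (1 - th) *: z) <= c.
  apply: le_trans (gc _ _ th01) _.
  have : th * (g x - c + del) = del by rewrite divfK ?lt0r_neq0.
  by rewrite /del; nra.
move=> /(proj_obtuse (convex_sublevel (c:=c) gc) projq) obtuse.
have E : th *: x + (1 - th) *: z - q = th *: n + (1 - th) *: (z - q).
  by apply/rowP => i; rewrite !mxE; ring.
rewrite E dotvDr !dotvZr in obtuse.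
rewrite ltNge; apply/negP => D0; have := mulr_gt0 th0 n_gt0.
have : 0 <= (1 - th) * dotv n (z - q) by rewrite mulr_ge0 // subr_ge0; case/andP: th01.
lra.
Qed.

Lemma proj_sublevel_eq : g q = c.
Proof.
case: projq => gq _; apply/eqP; rewrite eq_le gq /= leNgt.
by apply/negP => /proj_sublevel_dot_lt0; rewrite subrr dotv0r ltxx.
Qed.

Lemma proj_sublevel_subgrad : exists2 lam, 0 <= lam & subgrad g q (lam *: n).
Proof.
have up_q w : 0 <= dotv n w -> g q <= g (q + w).
  move=> nw; rewrite leNgt proj_sublevel_eq; apply/negP => /proj_sublevel_dot_lt0.
  by rewrite (addrC q) addrK ltNge nw.
pose V v := dotv n v = 0.
have convV : is_convex_set V by move=> v w l; rewrite /V dotvDr !dotvZr => -> -> _; lra.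
have minor0 v : V v -> dotv 0 v <= g (q + v) - g q.
  by move=> Vv; rewrite dotv0l subr_ge0 up_q // Vv.
(* extend the zero functional from the hyperplane V = n^perp to the line spanned by n *)
have [|v a Vv a0|lam lam0 ext] :=
  linear_extension (e := n) (c0 := 0) (convex_shift q gc) convV minor0.
- by rewrite /V dotv0r.
- rewrite mul0r dotv0l subr0 subr_ge0 up_q // dotvDr dotvZr Vv add0r.
  by rewrite mulr_ge0 ?ltW.
exists (lam / dotv n n); first by rewrite divr_ge0 // ltW.
move=> y; pose a := dotv n (y - q) / dotv n n; pose v := (y - q) - a *: n.
have Vv : V v by rewrite /V dotvBr dotvZr divfK ?subrr ?lt0r_neq0.
have := ext v a Vv; rewrite dotv0l add0r subrK subrKC dotvZl.
by rewrite mulrAC -mulrA -/a mulrC; lra.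
Qed.

End ProjectionOntoSublevel.

Section FeasibilityDistance.
Variables (R : realType) (d : nat).
Local Notation vec := 'rV[R]_d.
Variable g : vec -> R.

Definition feas_dist (z : vec) : R := inf [set enorm (z - u) | u in [set u | g u <= 0]].

Lemma feas_dist_le z u : g u <= 0 -> feas_dist z <= enorm (z - u).
Proof.
move=> gu; apply: ge_inf; last by exists u.
by exists 0 => _ [w _ <-]; exact: enorm_ge0.
Qed.

Hypothesis feasible : exists u, g u <= 0.

Lemma feas_dist_glb z c :
  (forall u, g u <= 0 -> c <= enorm (z - u)) -> c <= feas_dist z.
Proof.
have [u0 gu0] := feasible => lb; apply: lb_le_inf; first by exists (enorm (z - u0)), u0.
by move=> _ [u gu <-]; exact: lb.
Qed.

Lemma feas_dist_ge0 z : 0 <= feas_dist z.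
Proof. by apply: feas_dist_glb => u _; exact: enorm_ge0. Qed.

Lemma sqr_feas_dist_glb z c :
  (forall u, g u <= 0 -> c <= enorm (z - u) ^+ 2) -> c <= feas_dist z ^+ 2.
Proof.
move=> lb; have [c0|c_gt0] := lerP c 0; first exact: le_trans c0 (sqr_ge0 _).
rewrite -(sqr_sqrtr (ltW c_gt0)) ler_pXn2r ?nnegrE ?sqrtr_ge0 ?feas_dist_ge0 //.
apply: feas_dist_glb => u gu.
by rewrite -(ger0_norm (enorm_ge0 (z - u))) -sqrtr_sqr ler_sqrt ?sqr_ge0 ?lb.
Qed.

Lemma feas_dist_lipschitz z z' : feas_dist z <= feas_dist z' + enorm (z - z').
Proof.
rewrite -lerBlDr; apply: feas_dist_glb => u gu; rewrite lerBlDr.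
apply: le_trans (feas_dist_le z gu) _; rewrite [leRHS]addrC.
have -> : z - u = (z - z') + (z' - u) by rewrite addrA subrK.
exact: ler_enormD.
Qed.

Lemma subgrad_le_feas_dist z s Gg :
  0 < Gg -> enorm s <= Gg -> subgrad g z s -> g z <= Gg * feas_dist z.
Proof.
move=> Gg0 sGg sub_s; rewrite mulrC -ler_pdivrMr //; apply: feas_dist_glb => u gu.
have := sub_s u; rewrite -opprB dotvNr ler_pdivrMr // => sub_u.
have := cauchy_schwarz s (z - u); have := ler_wpM2r (enorm_ge0 (z - u)) sGg; lra.
Qed.

End FeasibilityDistance.

Lemma sharp_feas_dist (R : realType) (d : nat) (g : 'rV[R]_d -> R) (eps sigma Rad : R)
    (x : 'rV[R]_d) :
  convex_fun g -> 0 < eps -> 0 < sigma -> (exists z, g z = - eps) ->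
  (forall z, g z <= 0 -> in_ball Rad z) ->
  (forall z s, g z = - eps -> subgrad g z s -> sigma <= enorm s) ->
  0 < g x -> sigma * feas_dist g x <= g x.
Proof.
move=> gc eps0 sigma0 [z0 gz0] bounded sigma_le gx0.
have gx : - eps < g x by lra.
have [q projq] : exists q, is_proj (fun z => g z <= - eps) x q.
  apply: sublevel_proj_exists gc _ (fun z gz => bounded z (le_trans gz _)).
    by exists z0; rewrite gz0.
  by rewrite oppr_le0 ltW.
have gq := proj_sublevel_eq gc projq gx.
have [lam lam0 sub_q] := proj_sublevel_subgrad gc projq gx.
set n := x - q in sub_q *.
(* the projection onto the level set -eps carries a subgradient along n, of norm >= sigma *)
have sigma_n : sigma * enorm n <= g x + eps.
  have := sigma_le q _ gq sub_q; rewrite enormZ ger0_norm // => /(ler_wpM2r (enorm_ge0 n)).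
  by have := sub_q x; rewrite -/n dotvZl -sqr_enorm gq; lra.
have den0 : 0 < eps + g x by lra.
set mu := eps / (eps + g x); have mu_eq : mu * (eps + g x) = eps by rewrite divfK ?lt0r_neq0.
have mu01 : 0 <= mu <= 1.
  by rewrite divr_ge0 ?(ltW eps0) ?(ltW den0) //= ler_pdivrMr // mul1r lerDl ltW.
have gu : g (mu *: x + (1 - mu) *: q) <= 0.
  by apply: le_trans (gc _ _ _ mu01) _; rewrite gq; nra.
have := feas_dist_le x gu.
have -> : x - (mu *: x + (1 - mu) *: q) = (1 - mu) *: n.
  by apply/rowP => i; rewrite !mxE; ring.
rewrite enormZ ger0_norm ?subr_ge0; last by case/andP: mu01.
move=> /(ler_wpM2l (ltW sigma0)); have : 0 <= 1 - mu by rewrite subr_ge0; case/andP: mu01.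
by nra.
Qed.

Section FeasibilityContraction.
Variables (R : realType) (d : nat).
Local Notation vec := 'rV[R]_d.
Variables (g : vec -> R) (eps sigma Gg Rad : R).
Hypotheses (gc : convex_fun g) (eps0 : 0 < eps) (sigma0 : 0 < sigma) (Gg0 : 0 < Gg)
  (level : exists z, g z = - eps) (bounded : forall z, g z <= 0 -> in_ball Rad z)
  (Gg_bound : forall z s, in_ball Rad z -> subgrad g z s -> enorm s <= Gg)
  (sigma_le : forall z s, g z = - eps -> subgrad g z s -> sigma <= enorm s).

Local Notation rate := (Num.sqrt (1 - sigma ^+ 2 / Gg ^+ 2)).

Let feasible : exists u, g u <= 0.
Proof. by have [z gz] := level; exists z; rewrite gz oppr_le0 ltW. Qed.

Lemma feas_dist_polyak_step x s : in_ball Rad x -> subgrad g x s ->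
  feas_dist g (polyak_step (g x) x s x) <= rate * feas_dist g x.
Proof.
move=> bx sub_s; set D := feas_dist g x; have D0 : 0 <= D := feas_dist_ge0 feasible x.
have [gx0|gx0] := lerP (g x) 0.
  have D_eq0 : D = 0 by apply/eqP; rewrite eq_le D0 andbT -(enorm0 R d) -(subrr x) feas_dist_le.
  by rewrite polyak_step_id ?subrr ?dotv0r ?addr0 // -/D D_eq0 mulr0.
have s0 : s != 0.
  apply: contraTneq gx0 => s0; rewrite -leNgt; have [z gz] := level.
  by have := sub_s z; rewrite s0 dotv0l addr0 gz => /le_trans; apply; rewrite oppr_le0 ltW.
have s_gt0 := enorm_gt0 s0; have sGg := Gg_bound bx sub_s.
have sD : sigma * D <= g x := sharp_feas_dist gc eps0 sigma0 level bounded sigma_le gx0.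
(* each Polyak step removes at least (sigma D / Gg)^2 from the squared distance to X *)
have gain : sigma ^+ 2 * D ^+ 2 / Gg ^+ 2 <= g x ^+ 2 / enorm s ^+ 2.
  have sD0 : 0 <= sigma * D by rewrite mulr_ge0 // ltW.
  rewrite -exprMn; apply: (@le_trans _ _ (g x ^+ 2 / Gg ^+ 2)).
    by rewrite ler_wpM2r ?invr_ge0 ?sqr_ge0 // ler_pXn2r ?nnegrE // ltW.
  rewrite ler_wpM2l ?sqr_ge0 // lef_pV2 ?posrE ?exprn_gt0 //.
  by rewrite ler_pXn2r ?nnegrE ?enorm_ge0 // ltW.
set DP := feas_dist g _.
have : DP ^+ 2 + sigma ^+ 2 * D ^+ 2 / Gg ^+ 2 <= D ^+ 2.
  apply: sqr_feas_dist_glb => // u gu.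
  have := polyak_step_sqr_dist s0 gx0 (le_trans (sub_s u) gu).
  have : DP ^+ 2 <= enorm (polyak_step (g x) x s x - u) ^+ 2.
    by rewrite ler_pXn2r ?nnegrE ?feas_dist_ge0 ?enorm_ge0 // feas_dist_le.
  lra.
have DP0 : 0 <= DP := feas_dist_ge0 feasible _.
move=> DP_le; have : DP ^+ 2 <= D ^+ 2 * (1 - sigma ^+ 2 / Gg ^+ 2).
  by rewrite mulrBr mulr1 mulrA; lra.
by move=> /ler_wsqrtr; rewrite sqrtr_sqr sqrtrM ?sqr_ge0 // sqrtr_sqr !ger0_norm // mulrC.
Qed.

Lemma feas_dist_step x s gr eta Gf xn :
  in_ball Rad x -> subgrad g x s -> enorm gr <= Gf -> 0 <= eta ->
  is_proj (in_ball Rad) (polyak_step (g x) x s (x - eta *: gr)) xn ->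
  feas_dist g xn <= rate * feas_dist g x + eta * Gf.
Proof.
move=> bx sub_s grGf eta0 projn; set P := polyak_step (g x) x s.
have proj_le : feas_dist g xn <= feas_dist g (P (x - eta *: gr)).
  apply: feas_dist_glb => // u gu; apply: le_trans (feas_dist_le xn gu) _.
  by apply: (enorm_proj_le _ projn (bounded gu)); exact: convex_ball.
have move_le : enorm (P (x - eta *: gr) - P x) <= eta * Gf.
  apply: le_trans (polyak_step_nonexp _ _ _ _ _) _.
  by rewrite addrAC subrr add0r enormN enormZ ger0_norm // ler_wpM2l.
have := feas_dist_lipschitz feasible (P (x - eta *: gr)) (P x).
have := feas_dist_polyak_step bx sub_s; lra.
Qed.

End FeasibilityContraction.

Section GradientInequality.
Variables (R : realType) (d : nat).
Local Notation vec := 'rV[R]_d.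
Variables (f : vec -> R) (x v : vec).
Hypothesis fc : convex_fun f.

Lemma convex_slope_le (h : R) : h != 0 -> h <= 1 ->
  h^-1 * (f (h *: v + x) - f x) <= f (v + x) - f x.
Proof.
move=> h0 h1; case: (ltrgtP h 0) => [h_lt0|h_gt0|h_eq0]; last by rewrite h_eq0 eqxx in h0.
- (* x is the convex combination of h v + x and v + x with weights 1/(1-h) and -h/(1-h) *)
  have h1' : 0 < 1 - h by lra.
  have al01 : 0 <= (1 - h)^-1 <= 1 by rewrite invr_ge0 ltW //= invf_le1 //; lra.
  have := fc (h *: v + x) (v + x) al01.
  have -> : (1 - h)^-1 *: (h *: v + x) + (1 - (1 - h)^-1) *: (v + x) = x.
    by apply/rowP => i; rewrite !mxE; field; lra.
  move=> /(ler_wpM2l (ltW h1')); rewrite mulrDr !mulrA mulfV ?gt_eqF // mul1r.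
  have -> : (1 - h) * (1 - (1 - h)^-1) = - h by field; lra.
  by move=> hx; rewrite mulrC ler_ndivrMr //; lra.
- have h01 : 0 <= h <= 1 by rewrite ltW.
  have := fc (v + x) x h01.
  have -> : h *: (v + x) + (1 - h) *: x = h *: v + x by apply/rowP => i; rewrite !mxE; ring.
  by rewrite ler_pdivrMl //; lra.
Qed.

End GradientInequality.

Lemma convex_gradient_le (R : realType) (d : nat) (f : 'rV[R]_d -> R) (x u gr : 'rV[R]_d) :
  convex_fun f -> is_gradient f x gr -> f x + dotv gr (u - x) <= f u.
Proof.
move=> fc [fd fD]; rewrite -(fD (u - x)) addrC -lerBrDr.
have dv : derivable f x (u - x) := diff_derivable fd.
rewrite /derive; apply: limr_le => //; near=> h => /=.
have := convex_slope_le x (u - x) fc (h := h); rewrite subrK; apply.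
  by near: h; exact: nbhs_dnbhs_neq.
apply: le_trans (ler_norm h) (ltW _); near: h; exact: dnbhs0_lt.
Unshelve. all: by end_near.
Qed.

Lemma regret_step (R : realType) (d : nat) (f g : 'rV[R]_d -> R) (eta Gf Rad : R)
    (x s gr xn u : 'rV[R]_d) :
  convex_fun f -> is_gradient f x gr -> enorm gr <= Gf -> 0 < eta ->
  subgrad g x s -> g u <= 0 -> in_ball Rad u ->
  is_proj (in_ball Rad) (polyak_step (g x) x s (x - eta *: gr)) xn ->
  f x - f u <= (enorm (x - u) ^+ 2 - enorm (xn - u) ^+ 2) / (2 * eta) + eta * Gf ^+ 2 / 2.
Proof.
move=> fc fgr grGf eta0 sub_s gu bu projn; have eta2 : 0 < 2 * eta by rewrite mulr_gt0.
have lin : f x - f u <= dotv gr (x - u).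
  by have := convex_gradient_le u fc fgr; rewrite -opprB dotvNr; lra.
have fix_u : polyak_step (g x) x s u = u by apply: polyak_step_id; have := sub_s u; lra.
have : enorm (xn - u) <= enorm (x - eta *: gr - u).
  apply: le_trans (enorm_proj_le _ projn bu) _; first exact: convex_ball.
  by rewrite -{1}fix_u polyak_step_nonexp.
rewrite -ler_sqr_enorm addrAC [leRHS]sqr_enormB sqr_enormZ dotvZr (dotvC (x - u)) => dist_le.
have : eta ^+ 2 * enorm gr ^+ 2 <= eta ^+ 2 * Gf ^+ 2.
  by rewrite ler_wpM2l ?sqr_ge0 // ler_pXn2r ?nnegrE ?enorm_ge0 ?(le_trans (enorm_ge0 gr) grGf).
move=> Gf_le; have lin2 := ler_wpM2l (ltW eta2) lin.
have -> : (enorm (x - u) ^+ 2 - enorm (xn - u) ^+ 2) / (2 * eta) + eta * Gf ^+ 2 / 2 =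
    (enorm (x - u) ^+ 2 - enorm (xn - u) ^+ 2 + eta ^+ 2 * Gf ^+ 2) / (2 * eta).
  by field; rewrite gt_eqF.
by rewrite ler_pdivlMr // mulrC; lra.
Qed.

Section Rate.
Variables (R : realType) (sigma Gg : R).
Hypotheses (sigma0 : 0 < sigma) (Gg0 : 0 < Gg).
Local Notation kappa := (sigma ^+ 2 / Gg ^+ 2).

Let kappa_gt0 : 0 < kappa.
Proof. by rewrite divr_gt0 // exprn_gt0. Qed.

Lemma rate_lt1 : Num.sqrt (1 - kappa) < 1.
Proof.
have [k1|k1] := lerP (1 - kappa) 0; first by rewrite ler0_sqrtr.
by rewrite -[ltRHS]sqrtr1 ltr_sqrt // gtrBl kappa_gt0.
Qed.

Lemma rate_le_expR : Num.sqrt (1 - kappa) <= expR (- kappa / 2).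
Proof.
have e0 : 0 <= expR (- kappa / 2) := expR_ge0 _.
have [k1|k1] := lerP (1 - kappa) 0; first by rewrite ler0_sqrtr.
rewrite -(ger0_norm e0) -sqrtr_sqr ler_sqrt ?sqr_ge0 //.
by rewrite [expR _ ^+ 2]expr2 -expRD -splitr; have := expR_ge1Dx (- kappa); lra.
Qed.

Lemma rate_expn_le t : (1 <= t)%N ->
  Num.sqrt (1 - kappa) ^+ t.-1 <= expR (- (sigma ^+ 2 * (t%:R - 1)) / (2 * Gg ^+ 2)).
Proof.
move=> t1; have -> : - (sigma ^+ 2 * (t%:R - 1)) / (2 * Gg ^+ 2) = t.-1%:R * (- kappa / 2).
  by rewrite -(prednK t1) -addn1 natrD /=; field; rewrite gt_eqF // exprn_gt0.
by rewrite expRM_natl lerXn2r ?nnegrE ?sqrtr_ge0 ?expR_ge0 ?rate_le_expR.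
Qed.

End Rate.

Section PolyakOGD.
Variables (R : realType) (d T : nat).
Local Notation vec := 'rV[R]_d.
Variables (g : vec -> R) (f : nat -> vec -> R) (gradf : nat -> vec -> vec).
Variables (Rad Gf Gg sigma eps eta : R) (x s : nat -> vec).
Hypotheses (gc : convex_fun g) (bounded : forall z, g z <= 0 -> in_ball Rad z)
  (fc : forall t, (1 <= t <= T)%N ->
     convex_fun (f t) /\ forall z, is_gradient (f t) z (gradf t z))
  (Gf_bound : forall t z, (1 <= t <= T)%N -> in_ball Rad z -> enorm (gradf t z) <= Gf)
  (Gg0 : 0 < Gg) (Gg_bound : forall z sz, in_ball Rad z -> subgrad g z sz -> enorm sz <= Gg)
  (sigma0 : 0 < sigma) (eps0 : 0 < eps) (level : exists z, g z = - eps)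
  (sigma_le : forall z sz, g z = - eps -> subgrad g z sz -> sigma <= enorm sz)
  (x1 : in_ball Rad (x 1%N)) (eta0 : 0 < eta)
  (run : forall t, (1 <= t <= T)%N ->
     subgrad g (x t) (s t) /\
     is_proj (in_ball Rad) (pre_proj g eta 0 (x t) (gradf t (x t)) (s t)) (x t.+1)).

Local Notation rate := (Num.sqrt (1 - sigma ^+ 2 / Gg ^+ 2)).

Let feasible : exists u, g u <= 0.
Proof. by have [z gz] := level; exists z; rewrite gz oppr_le0 ltW. Qed.

Lemma iterate_in_ball t : (1 <= t <= T.+1)%N -> in_ball Rad (x t).
Proof.
case: t => [//|[//|t]] /andP[_ tT].
by have [_ []] := run (t := t.+1) tT.
Qed.

Lemma regret_le u : g u <= 0 ->
  \sum_(1 <= t < T.+1) f t (x t) - \sum_(1 <= t < T.+1) f t u <=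
  (2 * Rad) ^+ 2 / (2 * eta) + eta * Gf ^+ 2 / 2 * T%:R.
Proof.
move=> gu; have bu := bounded gu.
have step t : (1 <= t < T.+1)%N -> f t (x t) - f t u <=
    (enorm (x t - u) ^+ 2 - enorm (x t.+1 - u) ^+ 2) / (2 * eta) + eta * Gf ^+ 2 / 2.
  move=> /andP[t1 tT]; have htT : (1 <= t <= T)%N by rewrite t1 -ltnS.
  have [fct gradt] := fc htT; have [sub_t] := run htT; rewrite pre_proj0E => proj_t.
  have bt : in_ball Rad (x t) by apply: iterate_in_ball; rewrite t1 ltnW.
  exact: regret_step fct (gradt _) (Gf_bound htT bt) eta0 sub_t gu bu proj_t.
rewrite -sumrB; apply: le_trans (ler_sum_nat step) _.
rewrite big_split /= -mulr_suml sumr_const_nat subn1 /= -[_ *+ T]mulr_natr.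
rewrite (@telescope_sumr_eq _ _ _ (fun t => - enorm (x t - u) ^+ 2)) // => [|k _]; last first.
  by rewrite opprK addrC.
have eta2 : 0 < 2 * eta by rewrite mulr_gt0.
rewrite lerD2r ler_pM2r ?invr_gt0 // opprK addrC.
have := sqr_ge0 (enorm (x T.+1 - u)).
have Rad0 : 0 <= 2 * Rad := le_trans (enorm_ge0 _) (in_ball_enormB x1 bu).
have : enorm (x 1%N - u) ^+ 2 <= (2 * Rad) ^+ 2.
  by rewrite ler_pXn2r ?nnegrE ?enorm_ge0 ?in_ball_enormB.
lra.
Qed.

Lemma feas_dist_iterate k : (k < T)%N ->
  feas_dist g (x k.+1) <= rate ^+ k * (2 * Rad) + eta * Gf / (1 - rate).
Proof.
have rate1 : 0 < 1 - rate by rewrite subr_gt0 rate_lt1.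
elim: k => [|k IHk] kT.
  have Gf0 : 0 <= Gf := le_trans (enorm_ge0 _) (Gf_bound (t := 1) kT x1).
  have [z gz] := feasible; rewrite expr0 mul1r; apply: le_trans (feas_dist_le _ gz) _.
  have := in_ball_enormB x1 (bounded gz).
  have : 0 <= eta * Gf / (1 - rate) by rewrite divr_ge0 ?mulr_ge0 ?(ltW eta0) ?(ltW rate1).
  lra.
have htT : (1 <= k.+1 <= T)%N by exact: ltnW kT.
have [sub_t] := run htT; rewrite pre_proj0E => proj_t.
have bt : in_ball Rad (x k.+1) by apply: iterate_in_ball; rewrite /= ltnW.
have := feas_dist_step gc eps0 sigma0 Gg0 level bounded Gg_bound sigma_le
  bt sub_t (Gf_bound htT bt) (ltW eta0) proj_t.
(* the fixed point of D |-> rate * D + eta * Gf is eta * Gf / (1 - rate) *)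
have E : rate * (rate ^+ k * (2 * Rad) + eta * Gf / (1 - rate)) =
    rate ^+ k.+1 * (2 * Rad) + eta * Gf / (1 - rate) - eta * Gf.
  by rewrite [rate ^+ k.+1]exprS; field; rewrite gt_eqF.
by have := ler_wpM2l (sqrtr_ge0 (1 - sigma ^+ 2 / Gg ^+ 2)) (IHk (ltnW kT)); rewrite E; lra.
Qed.

Lemma violation_le t : (1 <= t <= T)%N ->
  g (x t) <= Gg * (2 * Rad * expR (- (sigma ^+ 2 * (t%:R - 1)) / (2 * Gg ^+ 2))
                   + eta * Gf / (1 - rate)).
Proof.
move=> /andP[t1 tT]; have htT : (1 <= t <= T)%N by rewrite t1.
have bt : in_ball Rad (x t) by apply: iterate_in_ball; rewrite t1 ltnW.
have [sub_t _] := run htT.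
apply: le_trans (subgrad_le_feas_dist feasible Gg0 (Gg_bound bt sub_t) sub_t) _.
rewrite ler_pM2l //; have := @feas_dist_iterate t.-1.
rewrite prednK // => /(_ tT) /le_trans; apply; rewrite lerD2r mulrC ler_wpM2l //.
  by rewrite mulr_ge0 // (le_trans (enorm_ge0 _) x1).
exact: rate_expn_le.
Qed.

End PolyakOGD.

Unset Implicit Arguments.

Theorem corollary3 (R : realType) (d T : nat) (hd : (0 < d)%N) (hT : (0 < T)%N)
  (g : 'rV[R]_d -> R) (f : nat -> 'rV[R]_d -> R) (gradf : nat -> 'rV[R]_d -> 'rV[R]_d)
  (Rad Gf Gg sigma eps : R)
  (x : nat -> 'rV[R]_d) (s : nat -> 'rV[R]_d) :
  convex_fun g ->
  (* (A1) *)
  0 < Rad -> (forall z, g z <= 0 -> in_ball Rad z) ->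
  (* (A2) *)
  0 < Gf ->
  (forall t, (1 <= t <= T)%N ->
     convex_fun (f t) /\ forall z, is_gradient (f t) z (gradf t z)) ->
  (forall t z, (1 <= t <= T)%N -> in_ball Rad z -> enorm (gradf t z) <= Gf) ->
  (* (A3) *)
  0 < Gg ->
  (forall z sz, in_ball Rad z -> subgrad g z sz -> enorm sz <= Gg) ->
  (* (A4) *)
  0 < sigma -> 0 < eps ->
  (exists z, g z = - eps) ->
  (forall z sz, g z = - eps -> subgrad g z sz -> sigma <= enorm sz) ->
  (* the algorithm, with x_1 in R B, eta = 2R/(Gf sqrt T), rho = 0 *)
  in_ball Rad (x 1%N) ->
  (forall t, (1 <= t <= T)%N ->
     subgrad g (x t) (s t) /\
     is_proj (in_ball Rad)
       (pre_proj g (2 * Rad / (Gf * Num.sqrt T%:R)) 0 (x t) (gradf t (x t)) (s t))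
       (x t.+1)) ->
  let gamma := 1 - sigma ^+ 2 / Gg ^+ 2 in
  let xi := 1 - Num.sqrt gamma in
  (* regret bound, against every comparator in X = {g <= 0} *)
  (forall u, g u <= 0 ->
     \sum_(1 <= t < T.+1) f t (x t) - \sum_(1 <= t < T.+1) f t u
       <= 2 * Rad * Gf * Num.sqrt T%:R) /\
  (* constraint violation bound *)
  (forall t, (1 <= t <= T)%N ->
     g (x t) <= 2 * Rad * Gg * expR (- (sigma ^+ 2 * (t%:R - 1)) / (2 * Gg ^+ 2))
                + 2 * Rad * Gg / (xi * Num.sqrt T%:R)).
Proof.
move=> gc Rad0 bounded Gf0 fc Gf_bound Gg0 Gg_bound sigma0 eps0 level sigma_le x1 run gamma xi.
set eta := 2 * Rad / (Gf * Num.sqrt T%:R) in run *.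
have sT : 0 < Num.sqrt (T%:R : R) by rewrite sqrtr_gt0 ltr0n.
have eta0 : 0 < eta by rewrite divr_gt0 ?mulr_gt0.
have xi0 : xi != 0 by rewrite subr_eq0 eq_sym lt_eqF ?rate_lt1.
split=> [u gu|t ht].
- rewrite (_ : _ * Num.sqrt _ = (2 * Rad) ^+ 2 / (2 * eta) + eta * Gf ^+ 2 / 2 * T%:R).
    exact (regret_le bounded fc Gf_bound x1 eta0 run gu).
  rewrite -[in RHS](@sqr_sqrtr _ T%:R) ?ler0n // /eta.
  by move: (Num.sqrt _) sT => st sT; field; rewrite !gt_eqF.
- rewrite (_ : _ + _ = Gg * (2 * Rad * expR (- (sigma ^+ 2 * (t%:R - 1)) / (2 * Gg ^+ 2))
                              + eta * Gf / xi)); last first.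
    by rewrite /eta; field; rewrite xi0 !gt_eqF.
  exact (violation_le gc bounded Gf_bound Gg0 Gg_bound sigma0 eps0 level sigma_le x1 eta0
    run ht).
Qed.
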